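(* Let $\varrho:\mathcal{Z}\to\mathbb{R}\cup\{+\infty\}$ be a coherent risk measure with preference to small outcomes which is normalized, i.e. $\varrho[\mathbb{I}]=1$. Then for every $\zeta\in\operatorname{dom}\varrho^*$, $\int_\Omega\langle\mathbf{1},\zeta(\omega)\rangle\,P(d\omega)=1$.
   Context: $(\Omega,\mathcal{F},P)$ is a probability space, $m\ge1$, $p\in[1,\infty)$, $\mathcal{Z}=\mathcal{L}_p(\Omega,\mathcal{F},P;\mathbb{R}^m)$ with norm topology, $\mathcal{Z}^*=\mathcal{L}_q(\Omega,\mathcal{F},P;\mathbb{R}^m)$, $1/p+1/q=1$, pairing $\langle\zeta,X\rangle=\int_\Omega\langle\zeta(\omega),X(\omega)\rangle\,dP(\omega)$. $\mathbf{1}\in\mathbb{R}^m$ is the all-ones vector, $\mathbb{I}$ the constant random vector equal to $\mathbf{1}$. A coherent risk measure with preference to small outcomes is a lower semicontinuous functional $\varrho:\mathcal{Z}\to\mathbb{R}\cup\{+\infty\}$ with nonempty domain satisfying: (A1) convexity; (A2) $X_i\ge Y_i$ a.s. for all $i$ implies $\varrho[X]\ge\varrho[Y]$; (A3) $\varrho[tX]=t\varrho[X]$ for $t>0$; (A4) $\varrho[X+a\mathbb{I}]=\varrho[X]+a\varrho[\mathbb{I}]$ for all $X$, $a\in\mathbb{R}$. $\varrho^*[\zeta]=\sup_X\{\langle\zeta,X\rangle-\varrho[X]\}$ and $\operatorname{dom}\varrho^*=\{\zeta:\varrho^*[\zeta]<\infty\}$. *)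

From HB Require Import structures.
From mathcomp Require Import all_boot all_order all_algebra.
From mathcomp Require Import all_classical all_reals all_analysis.
Set Implicit Arguments. Unset Strict Implicit. Unset Printing Implicit Defensive.
Import Order.TTheory GRing.Theory Num.Theory.
Local Open Scope classical_set_scope.
Local Open Scope ring_scope.
Local Open Scope ereal_scope.

(* A random vector in R^m is represented by its m components X i : T -> R. *)
Definition rvec (T : Type) (R : Type) (m : nat) := 'I_m -> T -> R.

Section Defs.
Context (d : measure_display) (T : measurableType d) (R : realType) (m : nat).
Variable P : probability T R.

Definition inL (r : \bar R) (X : rvec T R m) : Prop :=
  forall i, measurable_fun setT (X i) /\ finite_norm P r (X i).

(* conjugate exponent q of p : 1/p + 1/q = 1 *)
Definition conj_exp (p : R) : \bar R :=
  if p == 1%R then +oo else (p / (p - 1))%:E.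

(* a norm on L_p(Omega;R^m) (equivalent to any other choice, all norms on R^m
   being equivalent; only the induced topology matters) *)
Definition Lpnorm (p : R) (X : rvec T R m) : \bar R :=
  \sum_(i < m) 'N[P]_(p%:E)[EFin \o X i].

Definition pairing (zeta X : rvec T R m) : \bar R :=
  \sum_(i < m) \int[P]_w (zeta i w * X i w)%:E.

Definition vadd (X Y : rvec T R m) : rvec T R m := fun i w => (X i w + Y i w)%R.
Definition vscale (t : R) (X : rvec T R m) : rvec T R m := fun i w => (t * X i w)%R.
Definition vone : rvec T R m := fun _ _ => 1%R.

Definition coherent_risk (p : R) (rho : rvec T R m -> \bar R) : Prop :=
  (forall X, inL p%:E X -> rho X != -oo) /\
  (exists X, inL p%:E X /\ rho X < +oo) /\
  (forall X c, inL p%:E X -> c%:E < rho X ->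
     exists2 delta : R, (0 < delta)%R &
       forall Y, inL p%:E Y -> Lpnorm p (vadd Y (vscale (-1) X)) < delta%:E ->
         c%:E < rho Y) /\
  (forall X Y (l : R), inL p%:E X -> inL p%:E Y -> (0 <= l <= 1)%R ->
     rho (vadd (vscale l X) (vscale (1 - l) Y)) <=
       l%:E * rho X + (1 - l)%:E * rho Y) /\
  (forall X Y, inL p%:E X -> inL p%:E Y ->
     {ae P, forall w, forall i, (Y i w <= X i w)%R} -> rho Y <= rho X) /\
  (forall X (t : R), inL p%:E X -> (0 < t)%R -> rho (vscale t X) = t%:E * rho X) /\
  (forall X (a : R), inL p%:E X ->
     rho (vadd X (vscale a vone)) = rho X + a%:E * rho vone).

Definition conjugate (p : R) (rho : rvec T R m -> \bar R) (zeta : rvec T R m)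
  : \bar R :=
  ereal_sup [set pairing zeta X - rho X | X in [set X | inL p%:E X]].

Definition dom_conj (p : R) (rho : rvec T R m -> \bar R) (zeta : rvec T R m)
  : Prop :=
  inL (conj_exp p) zeta /\ conjugate p rho zeta < +oo.

End Defs.

From HB Require Import structures.
From mathcomp Require Import all_boot all_order all_algebra.
From mathcomp Require Import all_classical all_reals all_analysis.
From mathcomp Require Import lra.
Set Implicit Arguments. Unset Strict Implicit.
Import Order.TTheory GRing.Theory Num.Theory.
Local Open Scope classical_set_scope.
Local Open Scope ring_scope.
Local Open Scope ereal_scope.

(* Testing the conjugate against the constant positions b I gives
   rho^*[zeta] >= b E<1, zeta> - rho[b I] = b (E<1, zeta> - 1) for every real b,
   since rho[b I] = b by translation invariance and normalization.  A linear
   function of b bounded above by the finite number rho^*[zeta] is zero. *)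

Lemma linear_ubounded_eq0 (R : realFieldType) (a c : R) :
  (forall b, b * a <= c)%R -> a = 0%R.
Proof.
move=> le_c; apply/eqP; apply: contraT => a_neq0.
have := le_c ((c + 1) / a)%R.
by rewrite -mulrA mulVf // mulr1; lra.
Qed.

Lemma conj_exp_ge1 (R : realType) (p : R) : (1 <= p)%R -> 1 <= conj_exp p.
Proof.
move=> p_ge1; rewrite /conj_exp; case: ifPn => [_|p_neq1]; first exact: leey.
have p_gt1 : (1 < p)%R by rewrite lt_neqAle eq_sym p_neq1 p_ge1.
by rewrite lee_fin ler_pdivlMr ?subr_gt0 // mul1r; lra.
Qed.

Definition vcst {T R : Type} (m : nat) (b : R) : rvec T R m := fun _ _ => b.
Arguments vcst {T R} m b.

Section constant_positions.
Context (d : measure_display) (T : measurableType d) (R : realType).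
Variable P : probability T R.

Lemma finite_norm_integrable (q : \bar R) (f : T -> R) :
  1 <= q -> measurable_fun setT f -> finite_norm P q f ->
  P.-integrable setT (EFin \o f).
Proof.
move=> q_ge1 mf ff; apply/Lfun1_integrable.
apply: (@Lfun_subset _ _ _ P 1 q (lexx _) q_ge1) => //.
- by rewrite fin_num_measure.
- by apply/andP; split; rewrite inE.
Qed.

Lemma inL_vcst (m : nat) (p b : R) : inL P p%:E (vcst m b).
Proof.
move=> i; split; first exact: measurable_cst.
by have /andP[_] := @Lfun_cst _ _ _ P b p; rewrite inE.
Qed.

Lemma pairing_vcst (m : nat) (zeta : rvec T R m) (b : R) :
  (forall i, P.-integrable setT (EFin \o zeta i)) ->
  pairing P zeta (vcst m b) = b%:E * \sum_(i < m) \int[P]_w (zeta i w)%:E.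
Proof.
move=> Izeta; rewrite /pairing fin_num_sume_distrr //.
  apply: eq_bigr => i _.
  under eq_integral do rewrite EFinM muleC.
  by rewrite integralZl //; exact: Izeta.
by move=> i j _ _; rewrite fin_num_adde_defl //; exact: integrable_fin_num _ (Izeta j).
Qed.

Lemma coherent_risk_vcst (m : nat) (p : R) (rho : rvec T R m -> \bar R) (b : R) :
  coherent_risk P p rho -> rho (@vone d T R m) = 1 -> rho (vcst m b) = b%:E.
Proof.
move=> [_ [_ [_ [_ [_ [_ translation]]]]]] rho1.
have -> : vcst m b = vadd (@vone d T R m) (vscale (b - 1) (@vone d T R m)).
  by apply/funext => i; apply/funext => w; rewrite /vadd /vscale /vone mulr1 addrC subrK.
rewrite translation; last exact: inL_vcst 1%R.
by rewrite rho1 mule1 -EFinD addrC subrK.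
Qed.

End constant_positions.

Theorem corollary2 (d : measure_display) (T : measurableType d) (R : realType)
  (P : probability T R) (m : nat) (p : R) (rho : rvec T R m -> \bar R) :
  (1 <= m)%N -> (1 <= p)%R ->
  coherent_risk P p rho ->
  rho (@vone d T R m) = 1 ->
  forall zeta : rvec T R m, dom_conj P p rho zeta ->
    \int[P]_w (\sum_(i < m) zeta i w)%:E = 1.
Proof.
move=> _ p_ge1 rho_coherent rho1 zeta [Lzeta conj_lt].
have Izeta i : P.-integrable setT (EFin \o zeta i).
  by have [mz fz] := Lzeta i; exact: finite_norm_integrable (conj_exp_ge1 p_ge1) mz fz.
set S := \sum_(i < m) \int[P]_w (zeta i w)%:E.
have -> : \int[P]_w (\sum_(i < m) zeta i w)%:E = S.
  under eq_integral do rewrite -sumEFin.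
  by rewrite (integral_sum measurableT Izeta).
have S_fin : S \is a fin_num.
  by apply/sum_fin_numP => i _ _; exact: integrable_fin_num _ (Izeta i).
have conj_ge b : b%:E * S - b%:E <= conjugate P p rho zeta.
  apply: ereal_sup_ubound; exists (vcst m b); first exact: inL_vcst.
  by rewrite pairing_vcst // (coherent_risk_vcst _ rho_coherent rho1).
have conj_fin : conjugate P p rho zeta \is a fin_num.
  rewrite fin_numElt conj_lt andbT (lt_le_trans _ (conj_ge 0%R)) //.
  by rewrite mul0e sube0 ltNy0.
clearbody S; move: S_fin conj_fin conj_ge.
case: S => // s _; case: (conjugate P p rho zeta) => // c _ conj_ge.
congr (_%:E); apply/eqP; rewrite -subr_eq0; apply/eqP.
apply: (linear_ubounded_eq0 (c := c)) => b.
by have := conj_ge b; rewrite -EFinM -EFinB lee_fin mulrBr mulr1.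
Qed.
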